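(* Let $(C,\chi)$ be a Hopf heap and $x\in C$ a group-like element. Then $\mathrm{H}_x(C)\cong\mathrm{Tn}^r C\cong\mathrm{Tn}^l C$ as bialgebras, via $a\mapsto\tau_x^a$ (with inverse $\tau_a^b\mapsto[x,a,b]$) and $a\mapsto\sigma^a_x$ respectively. Consequently $\mathrm{Tn}^r C$ and $\mathrm{Tn}^l C$ are Hopf algebras.
   Context: Work over a field $\mathbb{F}$; coalgebras coassociative, counital, nonzero, Sweedler notation; $C^{\mathrm{co}}$ co-opposite. A Hopf heap is a coalgebra $C$ with a coalgebra map $\chi:C\otimes C^{\mathrm{co}}\otimes C\to C$, $a\otimes b\otimes c\mapsto[a,b,c]$, with $[[a,b,c],d,e]=[a,b,[c,d,e]]$ and $\sum[c_{(1)},c_{(2)},a]=\sum[a,c_{(1)},c_{(2)}]=\varepsilon(c)a$. An element $x$ is group-like if $\Delta(x)=x\otimes x$, $\varepsilon(x)=1$. $\mathrm{H}_x(C)$ is the Hopf algebra with underlying coalgebra $C$, unit $x$, product $ab=[a,x,b]$ and antipode $S(a)=[x,a,x]$. $\mathrm{Tn}^rC$ is the span of right translations $\tau_a^b:c\mapsto[c,a,b]$, a bialgebra with product $\tau_a^b\tau_c^d=\tau_c^d\circ\tau_a^b=\tau_a^{[b,c,d]}$, unit $\mathrm{id}_C$, coproduct $\Delta(\tau_a^b)=\sum\tau_{a_{(2)}}^{b_{(1)}}\otimes\tau_{a_{(1)}}^{b_{(2)}}$, counit $\varepsilon(\tau_a^b)=\varepsilon(a)\varepsilon(b)$. $\mathrm{Tn}^lC$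 is the span of left translations $\sigma^a_b:c\mapsto[a,b,c]$, a bialgebra with product $\sigma^a_b\sigma^c_d=\sigma^a_b\circ\sigma^c_d=\sigma^{[a,b,c]}_d$, unit $\mathrm{id}_C$, coproduct $\Delta(\sigma^a_b)=\sum\sigma^{a_{(1)}}_{b_{(2)}}\otimes\sigma^{a_{(2)}}_{b_{(1)}}$, counit $\varepsilon(\sigma^a_b)=\varepsilon(a)\varepsilon(b)$. *)

From HB Require Import structures.
From mathcomp Require Import all_boot all_order all_algebra.
From mathcomp Require Import boolp classical_sets functions.
From Stdlib Require Import ClassicalEpsilon.

Set Implicit Arguments.
Unset Strict Implicit.
Unset Printing Implicit Defensive.
Import GRing.Theory.
Local Open Scope ring_scope.

Section HopfHeaps.
Variable F : fieldType.

Definition lin (U W : lmodType F) (f : U -> W) : Prop :=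
  forall (a : F) (u v : U), f (a *: u + v) = a *: f u + f v.

Definition bilin (U V W : lmodType F) (b : U -> V -> W) : Prop :=
  (forall v, lin (fun u => b u v)) /\ (forall u, lin (b u)).

Definition trilin (U V W X : lmodType F) (t : U -> V -> W -> X) : Prop :=
  [/\ forall v w, lin (fun u => t u v w),
      forall u w, lin (fun v => t u v w) &
      forall u v, lin (t u v)].

(* Tensors.  An element of U (x) V is represented by a finite formal   *)
(* sum  sum_i u_i (x) v_i  (a list of pairs); two such sums are equal   *)
(* in U (x) V iff every bilinear map out of U x V takes the same value  *)
(* on them (universal property of the tensor product).  Same for three  *)
(* factors with trilinear maps.                                         *)
Definition teq2 (U V : lmodType F) (s t : seq (U * V)) : Prop :=
  forall (W : lmodType F) (b : U -> V -> W), bilin b ->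
    \sum_(p <- s) b p.1 p.2 = \sum_(p <- t) b p.1 p.2.

Definition teq3 (U V W : lmodType F) (s t : seq (U * V * W)) : Prop :=
  forall (X : lmodType F) (m : U -> V -> W -> X), trilin m ->
    \sum_(p <- s) m p.1.1 p.1.2 p.2 = \sum_(p <- t) m p.1.1 p.1.2 p.2.

Definition tscale (U V : lmodType F) (a : F) (s : seq (U * V)) : seq (U * V) :=
  [seq (a *: p.1, p.2) | p <- s].

(* Coalgebras (nonzero, coassociative, counital); D c is a Sweedler     *)
(* representative  sum c_(1) (x) c_(2)  of the coproduct of c.          *)
Record is_coalgebra (V : lmodType F) (D : V -> seq (V * V)) (e : V -> F)
  : Prop := {
  co_nonzero : exists c : V, c != 0;
  co_Dlin : forall (a : F) (u v : V), teq2 (D (a *: u + v)) (tscale a (D u) ++ D v);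
  co_elin : forall (a : F) (u v : V), e (a *: u + v) = a * e u + e v;
  co_coassoc : forall c : V,
    teq3 [seq (q.1, q.2, p.2) | p <- D c, q <- D p.1]
         [seq (p.1, q.1, q.2) | p <- D c, q <- D p.2];
  co_counitl : forall c : V, \sum_(p <- D c) e p.1 *: p.2 = c;
  co_counitr : forall c : V, \sum_(p <- D c) e p.2 *: p.1 = c }.

(* Hopf heaps: chi a b c = [a,b,c], a coalgebra map C (x) C^co (x) C -> C *)
Record is_hopf_heap (V : lmodType F) (D : V -> seq (V * V)) (e : V -> F)
  (chi : V -> V -> V -> V) : Prop := {
  hh_coalg : is_coalgebra D e;
  hh_trilin : trilin chi;
  hh_Dchi : forall a b c : V,
    teq2 (D (chi a b c))
         [seq (chi p.1 qr.1.2 qr.2.1, chi p.2 qr.1.1 qr.2.2)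
           | p <- D a, qr <- [seq (q, r) | q <- D b, r <- D c]];
  hh_echi : forall a b c : V, e (chi a b c) = e a * e b * e c;
  hh_assoc : forall a b c d f : V, chi (chi a b c) d f = chi a b (chi c d f);
  hh_left : forall a c : V, \sum_(p <- D c) chi p.1 p.2 a = e c *: a;
  hh_right : forall a c : V, \sum_(p <- D c) chi a p.1 p.2 = e c *: a }.

Definition grouplike (V : lmodType F) (D : V -> seq (V * V)) (e : V -> F) (x : V)
  : Prop := teq2 (D x) [:: (x, x)] /\ e x = 1.

(* Bialgebra structure on a subspace P of an ambient vector space A     *)
(* (tensor equalities are taken in A (x) A, which contains P (x) P).    *)
Record is_bialg_on (A : lmodType F) (P : A -> Prop) (mul : A -> A -> A)
  (one : A) (D : A -> seq (A * A)) (e : A -> F) : Prop := {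
  ba_sub0 : P 0;
  ba_subL : forall (a : F) u v, P u -> P v -> P (a *: u + v);
  ba_oneP : P one;
  ba_mulP : forall u v, P u -> P v -> P (mul u v);
  ba_mull : forall (a : F) u v w, P u -> P v -> P w ->
      mul (a *: u + v) w = a *: mul u w + mul v w;
  ba_mulr : forall (a : F) u v w, P u -> P v -> P w ->
      mul w (a *: u + v) = a *: mul w u + mul w v;
  ba_assoc : forall u v w, P u -> P v -> P w -> mul (mul u v) w = mul u (mul v w);
  ba_unitl : forall u, P u -> mul one u = u;
  ba_unitr : forall u, P u -> mul u one = u;
  ba_DP : forall u p, P u -> List.In p (D u) -> P p.1 /\ P p.2;
  ba_Dlin : forall (a : F) u v, P u -> P v ->
      teq2 (D (a *: u + v)) (tscale a (D u) ++ D v);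
  ba_elin : forall (a : F) u v, P u -> P v -> e (a *: u + v) = a * e u + e v;
  ba_coassoc : forall u, P u ->
    teq3 [seq (q.1, q.2, p.2) | p <- D u, q <- D p.1]
         [seq (p.1, q.1, q.2) | p <- D u, q <- D p.2];
  ba_counitl : forall u, P u -> \sum_(p <- D u) e p.1 *: p.2 = u;
  ba_counitr : forall u, P u -> \sum_(p <- D u) e p.2 *: p.1 = u;
  ba_Dmul : forall u v, P u -> P v ->
    teq2 (D (mul u v)) [seq (mul p.1 q.1, mul p.2 q.2) | p <- D u, q <- D v];
  ba_Done : teq2 (D one) [:: (one, one)];
  ba_emul : forall u v, P u -> P v -> e (mul u v) = e u * e v;
  ba_eone : e one = 1 }.

Definition is_antipode_on (A : lmodType F) (P : A -> Prop) (mul : A -> A -> A)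
  (one : A) (D : A -> seq (A * A)) (e : A -> F) (S : A -> A) : Prop :=
  [/\ forall u, P u -> P (S u),
      forall (a : F) u v, P u -> P v -> S (a *: u + v) = a *: S u + S v &
      forall u, P u ->
        \sum_(p <- D u) mul (S p.1) p.2 = e u *: one /\
        \sum_(p <- D u) mul p.1 (S p.2) = e u *: one].

Definition is_hopf_on (A : lmodType F) (P : A -> Prop) (mul : A -> A -> A)
  (one : A) (D : A -> seq (A * A)) (e : A -> F) : Prop :=
  is_bialg_on P mul one D e /\ exists S : A -> A, is_antipode_on P mul one D e S.

Record is_bialg_iso (A B : lmodType F)
  (PA : A -> Prop) (mulA : A -> A -> A) (oneA : A) (DA : A -> seq (A * A)) (eA : A -> F)
  (PB : B -> Prop) (mulB : B -> B -> B) (oneB : B) (DB : B -> seq (B * B)) (eB : B -> F)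
  (f : A -> B) : Prop := {
  iso_maps : forall u, PA u -> PB (f u);
  iso_bij : forall v, PB v -> exists! u, PA u /\ f u = v;
  iso_lin : forall (a : F) u v, PA u -> PA v -> f (a *: u + v) = a *: f u + f v;
  iso_mul : forall u v, PA u -> PA v -> f (mulA u v) = mulB (f u) (f v);
  iso_one : f oneA = oneB;
  iso_D : forall u, PA u -> teq2 (DB (f u)) [seq (f p.1, f p.2) | p <- DA u];
  iso_e : forall u, PA u -> eB (f u) = eA u }.

Definition Hx_mul (V : lmodType F) (chi : V -> V -> V -> V) (x : V) (a b : V) : V :=
  chi a x b.
Definition Hx_S (V : lmodType F) (chi : V -> V -> V -> V) (x : V) (a : V) : V :=
  chi x a x.

Definition tau (V : lmodType F) (chi : V -> V -> V -> V) (a b : V) : V -> V :=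
  fun c => chi c a b.

Definition tnr_eval (V : lmodType F) (chi : V -> V -> V -> V)
  (s : seq (F * V * V)) : V -> V :=
  \sum_(t <- s) t.1.1 *: tau chi t.1.2 t.2.

Definition inTnr (V : lmodType F) (chi : V -> V -> V -> V) (f : V -> V) : Prop :=
  exists s : seq (F * V * V), f = tnr_eval chi s.

Definition tnr_rep (V : lmodType F) (chi : V -> V -> V -> V) (f : V -> V)
  : seq (F * V * V) :=
  epsilon (inhabits [::]) (fun s => f = tnr_eval chi s).

Definition Tnr_mul (V : lmodType F) (f g : V -> V) : V -> V := fun c => g (f c).

(* Delta(tau_a^b) = sum tau_{a(2)}^{b(1)} (x) tau_{a(1)}^{b(2)}, extended linearly *)
Definition Tnr_D (V : lmodType F) (D : V -> seq (V * V)) (chi : V -> V -> V -> V)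
  (f : V -> V) : seq ((V -> V) * (V -> V)) :=
  flatten [seq tscale t.1.1
             [seq (tau chi p.2 q.1, tau chi p.1 q.2) | p <- D t.1.2, q <- D t.2]
          | t <- tnr_rep chi f].

Definition Tnr_e (V : lmodType F) (e : V -> F) (chi : V -> V -> V -> V)
  (f : V -> V) : F :=
  \sum_(t <- tnr_rep chi f) t.1.1 * (e t.1.2 * e t.2).

Definition sigma (V : lmodType F) (chi : V -> V -> V -> V) (a b : V) : V -> V :=
  fun c => chi a b c.

Definition tnl_eval (V : lmodType F) (chi : V -> V -> V -> V)
  (s : seq (F * V * V)) : V -> V :=
  \sum_(t <- s) t.1.1 *: sigma chi t.1.2 t.2.

Definition inTnl (V : lmodType F) (chi : V -> V -> V -> V) (f : V -> V) : Prop :=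
  exists s : seq (F * V * V), f = tnl_eval chi s.

Definition tnl_rep (V : lmodType F) (chi : V -> V -> V -> V) (f : V -> V)
  : seq (F * V * V) :=
  epsilon (inhabits [::]) (fun s => f = tnl_eval chi s).

Definition Tnl_mul (V : lmodType F) (f g : V -> V) : V -> V := fun c => f (g c).

(* Delta(sigma^a_b) = sum sigma^{a(1)}_{b(2)} (x) sigma^{a(2)}_{b(1)} *)
Definition Tnl_D (V : lmodType F) (D : V -> seq (V * V)) (chi : V -> V -> V -> V)
  (f : V -> V) : seq ((V -> V) * (V -> V)) :=
  flatten [seq tscale t.1.1
             [seq (sigma chi p.1 q.2, sigma chi p.2 q.1) | p <- D t.1.2, q <- D t.2]
          | t <- tnl_rep chi f].

Definition Tnl_e (V : lmodType F) (e : V -> F) (chi : V -> V -> V -> V)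
  (f : V -> V) : F :=
  \sum_(t <- tnl_rep chi f) t.1.1 * (e t.1.2 * e t.2).

End HopfHeaps.

From HB Require Import structures.
From mathcomp Require Import all_boot all_order all_algebra.
From mathcomp Require Import boolp classical_sets functions.
From Stdlib Require Import ClassicalEpsilon.

Set Implicit Arguments.
Unset Strict Implicit.
Unset Printing Implicit Defensive.
Import GRing.Theory.
Local Open Scope ring_scope.

Section LinearMaps.
Variable F : fieldType.
Implicit Types U W X : lmodType F.

Lemma linD U W (f : U -> W) : lin f -> forall u v, f (u + v) = f u + f v.
Proof. by move=> Hf u v; have := Hf 1 u v; rewrite !scale1r. Qed.

Lemma lin0 U W (f : U -> W) : lin f -> f 0 = 0.
Proof. by move=> Hf; apply: (@addrI _ (f 0)); rewrite addr0 -linD // addr0. Qed.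

Lemma linZ U W (f : U -> W) : lin f -> forall a u, f (a *: u) = a *: f u.
Proof. by move=> Hf a u; rewrite -[a *: u]addr0 Hf lin0 // addr0. Qed.

Lemma lin_sum U W (f : U -> W) I (r : seq I) (G : I -> U) : lin f ->
  f (\sum_(i <- r) G i) = \sum_(i <- r) f (G i).
Proof.
move=> Hf; elim: r => [|i r IH]; first by rewrite !big_nil lin0.
by rewrite !big_cons linD // IH.
Qed.

Lemma lin_comp U W X (f : U -> W) (g : W -> X) :
  lin f -> lin g -> lin (fun u => g (f u)).
Proof. by move=> Hf Hg a u v; rewrite Hf Hg. Qed.

Lemma lin_sumf U W I (r : seq I) (G : I -> U -> W) :
  (forall i, lin (G i)) -> lin (fun u => \sum_(i <- r) G i u).
Proof.
move=> HG a u v; rewrite scaler_sumr -big_split.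
by apply: eq_bigr => i _; exact: HG.
Qed.

End LinearMaps.

Section TensorSums.
Variable F : fieldType.
Implicit Types U V W : lmodType F.

(* The value of a bilinear map h on a formal tensor s = sum_i u_i (x) v_i;
   by definition of teq2 it only depends on the tensor s represents. *)
Definition tsum U V W (h : U -> V -> W) (s : seq (U * V)) : W :=
  \sum_(p <- s) h p.1 p.2.

Lemma tsum_teq2 U V W (h : U -> V -> W) (s t : seq (U * V)) :
  teq2 s t -> bilin h -> tsum h s = tsum h t.
Proof. by move=> Hst Hh; apply: Hst. Qed.

Lemma tsum_cat U V W (h : U -> V -> W) s t : tsum h (s ++ t) = tsum h s + tsum h t.
Proof. exact: big_cat. Qed.

Lemma tsum_tscale U V W (h : U -> V -> W) a s : (forall v, lin (h^~ v)) ->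
  tsum h (tscale a s) = a *: tsum h s.
Proof.
move=> Hh; rewrite /tsum /tscale big_map scaler_sumr; apply: eq_bigr => p _.
exact: (linZ (Hh p.2)).
Qed.

Lemma tsum_map U V U' V' W (h : U' -> V' -> W) (f : U -> U') (g : V -> V') s :
  tsum h [seq (f p.1, g p.2) | p <- s] = tsum (fun y z => h (f y) (g z)) s.
Proof. exact: big_map. Qed.

Lemma bilin_comp U V U' V' W (h : U' -> V' -> W) (f : U -> U') (g : V -> V') :
  bilin h -> lin f -> lin g -> bilin (fun y z => h (f y) (g z)).
Proof.
case=> Hh1 Hh2 Hf Hg; split=> [z|y]; first exact: lin_comp Hf (Hh1 _).
exact: lin_comp Hg (Hh2 _).
Qed.

Lemma bilin_flip U V W (h : U -> V -> W) : bilin h -> bilin (fun z y => h y z).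
Proof. by case. Qed.

Lemma bilin_scale U V W (k : U -> F) (G : V -> W) :
  (forall a u v, k (a *: u + v) = a * k u + k v) -> lin G ->
  bilin (fun y z => k y *: G z).
Proof.
move=> Hk HG; split=> [z|y] a u v; first by rewrite Hk scalerDl scalerA.
by rewrite HG scalerDr !scalerA mulrC.
Qed.

Lemma bilin_sum U V U' V' W I (r : seq I) (h : U' -> V' -> W)
    (k1 : I -> U -> U') (k2 : I -> V -> V') :
  bilin h -> (forall i, lin (k1 i)) -> (forall i, lin (k2 i)) ->
  bilin (fun y z => \sum_(i <- r) h (k1 i y) (k2 i z)).
Proof.
move=> Hh Hk1 Hk2; have Hi i := bilin_comp Hh (Hk1 i) (Hk2 i).
by split=> [z|y]; apply: lin_sumf => i; case: (Hi i).
Qed.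

Lemma tsum_lin U W (D : U -> seq (U * U)) (h : U -> U -> W) :
  (forall a u v, teq2 (D (a *: u + v)) (tscale a (D u) ++ D v)) ->
  bilin h -> lin (fun u => tsum h (D u)).
Proof.
move=> HD Hh a u v; rewrite (tsum_teq2 (HD a u v) Hh) tsum_cat tsum_tscale //.
by case: Hh.
Qed.

End TensorSums.

Lemma eq_big_In I (M : nmodType) (r : seq I) (G H : I -> M) :
  (forall i, List.In i r -> G i = H i) -> \sum_(i <- r) G i = \sum_(i <- r) H i.
Proof.
elim: r => [|i r IH] E; first by rewrite !big_nil.
by rewrite !big_cons (E i (or_introl erefl)) IH // => j Hj; apply: E; right.
Qed.

Lemma In_map I J (f : I -> J) (s : seq I) y :
  List.In y (map f s) -> exists2 x, List.In x s & y = f x.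
Proof.
elim: s => [|x s IH] //= [<-|/IH [z Hz ->]]; first by exists x; first left.
by exists z; first right.
Qed.

Lemma In_flatten I (ss : seq (seq I)) y :
  List.In y (flatten ss) -> exists2 s, List.In s ss & List.In y s.
Proof.
elim: ss => [|s ss IH] //= Hin; case: (List.in_app_or _ _ _ Hin) => [Hy|/IH [t Ht Hy]].
  by exists s; first left.
by exists t; first right.
Qed.

(* Transport of structure: a bialgebra isomorphism f : A -> (B, PB) which has
   a linear left inverse g makes the structure maps of B agree, on PB, with
   those of A conjugated by f and g; hence B inherits the bialgebra axioms and
   every antipode S of A yields the antipode f o S o g of B. *)
Section Transport.
Variables (F : fieldType) (A B : lmodType F).
Implicit Types W X : lmodType F.
Variables (mA : A -> A -> A) (oA : A) (DA : A -> seq (A * A)) (eA : A -> F).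
Variables (PB : B -> Prop) (mB : B -> B -> B) (oB : B)
          (DB : B -> seq (B * B)) (eB : B -> F).
Variables (f : A -> B) (g : B -> A).
Hypothesis HA : is_bialg_on (fun _ : A => True) mA oA DA eA.
Hypothesis HI : is_bialg_iso (fun _ : A => True) mA oA DA eA PB mB oB DB eB f.
Hypothesis g_lin : lin g.
Hypothesis fK : cancel f g.
Hypothesis DB_P : forall u p, PB u -> List.In p (DB u) -> PB p.1 /\ PB p.2.

Let f_lin : lin f. Proof. by move=> a u v; apply: (iso_lin HI). Qed.
Let PB_f u : PB (f u). Proof. exact: (iso_maps HI (u := u) I). Qed.
Let gK v : PB v -> f (g v) = v.
Proof. by move=> Hv; have [u [[_ <-] _]] := iso_bij HI Hv; rewrite fK. Qed.

Let mA_linl c : lin (mA^~ c).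
Proof. by move=> a u v; apply: (ba_mull HA). Qed.
Let mA_linr c : lin (mA c).
Proof. by move=> a u v; apply: (ba_mulr HA). Qed.
Let eA_lin a u v : eA (a *: u + v) = a * eA u + eA v.
Proof. exact: (ba_elin HA a (u := u) (v := v) I I). Qed.
Let DA_lin a u v : teq2 (DA (a *: u + v)) (tscale a (DA u) ++ DA v).
Proof. exact: (ba_Dlin HA a (u := u) (v := v) I I). Qed.

Let PB_lin a u v : PB u -> PB v -> PB (a *: u + v).
Proof. by move=> Hu Hv; rewrite -(gK Hu) -(gK Hv) -f_lin. Qed.
Let mBE u v : PB u -> PB v -> mB u v = f (mA (g u) (g v)).
Proof. by move=> Hu Hv; rewrite (iso_mul HI) ?gK. Qed.
Let eBE u : PB u -> eB u = eA (g u).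
Proof. by move=> Hu; rewrite -{1}(gK Hu) (iso_e HI). Qed.
Let oBE : oB = f oA.
Proof. by rewrite (iso_one HI). Qed.

Lemma tsum_DB W (h : B -> B -> W) u : PB u -> bilin h ->
  tsum h (DB u) = tsum (fun y z => h (f y) (f z)) (DA (g u)).
Proof.
by move=> Hu Hh; rewrite -{1}(gK Hu) (tsum_teq2 (iso_D HI (u := g u) I) Hh) tsum_map.
Qed.

Lemma tsum_DB_on W (h : B -> B -> W) (H : A -> A -> W) u : PB u -> bilin H ->
  (forall y z, PB y -> PB z -> h y z = H (g y) (g z)) ->
  tsum h (DB u) = tsum H (DA (g u)).
Proof.
move=> Hu HH Eh; transitivity (tsum (fun y z => H (g y) (g z)) (DB u)).
  by apply: eq_big_In => p /(DB_P Hu) [H1 H2]; exact: Eh.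
rewrite tsum_DB //; last exact: bilin_comp.
by apply: eq_bigr => p _; rewrite !fK.
Qed.

Lemma DB_iter_left X (m : B -> B -> B -> X) u : PB u -> trilin m ->
  \sum_(p <- DB u) \sum_(q <- DB p.1) m q.1 q.2 p.2 =
  \sum_(p <- DA (g u)) \sum_(q <- DA p.1) m (f q.1) (f q.2) (f p.2).
Proof.
move=> Hu [Hm1 Hm2 Hm3].
have Hm12 c : bilin (fun y z => m (f y) (f z) c).
  exact: (bilin_comp (h := fun y z => m y z c)
            (conj (fun z => Hm1 z c) (fun y => Hm2 y c)) f_lin f_lin).
apply: (tsum_DB_on (h := fun y z => \sum_(q <- DB y) m q.1 q.2 z)
          (H := fun y z => \sum_(q <- DA y) m (f q.1) (f q.2) (f z))) => //.
- split=> [z|y]; first exact: tsum_lin DA_lin (Hm12 (f z)).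
  by apply: lin_sumf => q; exact: lin_comp f_lin (Hm3 _ _).
- move=> y z Hy Hz; rewrite gK //.
  apply: (tsum_DB_on (h := fun a b => m a b z)
                      (H := fun a b => m (f a) (f b) z)) => // a b Ha Hb.
  by rewrite !gK.
Qed.

Lemma DB_iter_right X (m : B -> B -> B -> X) u : PB u -> trilin m ->
  \sum_(p <- DB u) \sum_(q <- DB p.2) m p.1 q.1 q.2 =
  \sum_(p <- DA (g u)) \sum_(q <- DA p.2) m (f p.1) (f q.1) (f q.2).
Proof.
move=> Hu [Hm1 Hm2 Hm3].
have Hm23 c : bilin (fun y z => m c (f y) (f z)).
  exact: (bilin_comp (h := m c)
            (conj (fun z => Hm2 c z) (fun y => Hm3 c y)) f_lin f_lin).
apply: (tsum_DB_on (h := fun y z => \sum_(q <- DB z) m y q.1 q.2)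
          (H := fun y z => \sum_(q <- DA z) m (f y) (f q.1) (f q.2))) => //.
- split=> [z|y]; last exact: tsum_lin DA_lin (Hm23 (f y)).
  by apply: lin_sumf => q; exact: lin_comp f_lin (Hm1 _ _).
- move=> y z Hy Hz; rewrite gK //.
  apply: (tsum_DB_on (h := fun a b => m y a b)
                      (H := fun a b => m y (f a) (f b))) => // a b Ha Hb.
  by rewrite !gK.
Qed.

Lemma DB_counitl u : PB u -> \sum_(p <- DB u) eB p.1 *: p.2 = u.
Proof.
move=> Hu; transitivity (tsum (fun y z => eA y *: f z) (DA (g u))).
  apply: (tsum_DB_on (h := fun y z => eB y *: z)) => // [|y z Hy Hz].
    exact: bilin_scale.
  by rewrite eBE ?gK.
rewrite -{2}(gK Hu) -{2}(ba_counitl HA (u := g u) I) (lin_sum _ _ f_lin).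
by rewrite /tsum; apply: eq_bigr => p _; rewrite (linZ f_lin).
Qed.

Lemma DB_counitr u : PB u -> \sum_(p <- DB u) eB p.2 *: p.1 = u.
Proof.
move=> Hu; transitivity (tsum (fun y z => eA z *: f y) (DA (g u))).
  apply: (tsum_DB_on (h := fun y z => eB z *: y)) => // [|y z Hy Hz].
    exact: bilin_flip (bilin_scale _ _).
  by rewrite eBE ?gK.
rewrite -{2}(gK Hu) -{2}(ba_counitr HA (u := g u) I) (lin_sum _ _ f_lin).
by rewrite /tsum; apply: eq_bigr => p _; rewrite (linZ f_lin).
Qed.

Lemma DB_mul u v : PB u -> PB v ->
  teq2 (DB (mB u v)) [seq (mB p.1 q.1, mB p.2 q.2) | p <- DB u, q <- DB v].
Proof.
move=> Hu Hv W h Hh.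
have Hhf : bilin (fun y z => h (f y) (f z)) := bilin_comp Hh f_lin f_lin.
transitivity (tsum (fun y z => h (f y) (f z))
  [seq (mA p.1 q.1, mA p.2 q.2) | p <- DA (g u), q <- DA (g v)]).
  rewrite -(tsum_teq2 (ba_Dmul HA (u := g u) (v := g v) I I) Hhf).
  by rewrite -{1}[mA _ _]fK -tsum_DB // -mBE.
rewrite /tsum !big_allpairs_dep /=; symmetry.
apply: (tsum_DB_on (h := fun y z => \sum_(q <- DB v) h (mB y q.1) (mB z q.2))
          (H := fun y z => \sum_(q <- DA (g v)) h (f (mA y q.1)) (f (mA z q.2))))
  => // [|y z Hy Hz].
  exact: (bilin_sum _ Hh (fun q => lin_comp (mA_linl q.1) f_lin)
                         (fun q => lin_comp (mA_linl q.2) f_lin)).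
apply: (tsum_DB_on (h := fun a b => h (mB y a) (mB z b))
          (H := fun a b => h (f (mA (g y) a)) (f (mA (g z) b)))) => // [|a b Ha Hb].
  exact: bilin_comp Hh (lin_comp (mA_linr _) f_lin) (lin_comp (mA_linr _) f_lin).
by rewrite !mBE.
Qed.

Lemma DB_lin a u v : PB u -> PB v ->
  teq2 (DB (a *: u + v)) (tscale a (DB u) ++ DB v).
Proof.
move=> Hu Hv W h Hh; have Huv := PB_lin a Hu Hv.
change (tsum h (DB (a *: u + v)) = tsum h (tscale a (DB u) ++ DB v)).
rewrite tsum_cat tsum_tscale; last by case: Hh.
rewrite !tsum_DB // g_lin.
exact: (tsum_lin DA_lin (bilin_comp Hh f_lin f_lin) a (g u) (g v)).
Qed.

Lemma DB_coassoc u : PB u ->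
  teq3 [seq (q.1, q.2, p.2) | p <- DB u, q <- DB p.1]
       [seq (p.1, q.1, q.2) | p <- DB u, q <- DB p.2].
Proof.
move=> Hu X m Hm; rewrite !big_allpairs_dep /= DB_iter_left // DB_iter_right //.
have Hmf : trilin (fun a b c => m (f a) (f b) (f c)).
  case: Hm => Hm1 Hm2 Hm3; split=> [b c|a c|a b].
  - exact: lin_comp f_lin (Hm1 _ _).
  - exact: lin_comp f_lin (Hm2 _ _).
  - exact: lin_comp f_lin (Hm3 _ _).
by have := ba_coassoc HA (u := g u) I Hmf; rewrite !big_allpairs_dep.
Qed.

Lemma transport_bialg : is_bialg_on PB mB oB DB eB.
Proof.
split.
- by rewrite -(lin0 f_lin).
- exact: PB_lin.
- by rewrite oBE.
- by move=> u v Hu Hv; rewrite mBE.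
- move=> a u v w Hu Hv Hw; have Huv := PB_lin a Hu Hv.
  by rewrite !mBE // g_lin mA_linl f_lin.
- move=> a u v w Hu Hv Hw; have Huv := PB_lin a Hu Hv.
  by rewrite !mBE // g_lin mA_linr f_lin.
- move=> u v w Hu Hv Hw.
  by rewrite [mB u v]mBE // [mB v w]mBE // !mBE // !fK (ba_assoc HA).
- by move=> u Hu; rewrite oBE mBE // fK (ba_unitl HA) // gK.
- by move=> u Hu; rewrite oBE mBE // fK (ba_unitr HA) // gK.
- exact: DB_P.
- exact: DB_lin.
- move=> a u v Hu Hv; have Huv := PB_lin a Hu Hv.
  by rewrite !eBE // g_lin eA_lin.
- exact: DB_coassoc.
- exact: DB_counitl.
- exact: DB_counitr.
- exact: DB_mul.
- move=> W h Hh; change (tsum h (DB oB) = tsum h [:: (oB, oB)]).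
  rewrite oBE tsum_DB // fK (tsum_teq2 (ba_Done HA) (bilin_comp Hh f_lin f_lin)).
  by rewrite /tsum !big_seq1.
- by move=> u v Hu Hv; rewrite mBE // eBE // fK (ba_emul HA) // !eBE.
- by rewrite oBE eBE // fK (ba_eone HA).
Qed.

Lemma transport_antipode (SA : A -> A) :
  is_antipode_on (fun _ : A => True) mA oA DA eA SA ->
  is_antipode_on PB mB oB DB eB (fun v => f (SA (g v))).
Proof.
case=> _ SA_lin' HS; have SA_lin : lin SA by move=> a u v; exact: SA_lin'.
have fmA_bilin : bilin (fun y z => f (mA y z)).
  by split=> [z|y]; [exact: lin_comp (mA_linl z) f_lin | exact: lin_comp (mA_linr y) f_lin].
have id_lin : lin (fun y : A => y) by [].
split=> [u _ | a u v Hu Hv | u Hu]; first exact: PB_f.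
  by rewrite g_lin SA_lin f_lin.
have [HSl HSr] := HS (g u) I; split.
- transitivity (tsum (fun y z => f (mA (SA y) z)) (DA (g u))).
    apply: (tsum_DB_on (h := fun y z => mB (f (SA (g y))) z)) => // [|y z Hy Hz].
      exact: bilin_comp fmA_bilin SA_lin id_lin.
    by rewrite mBE // fK.
  by rewrite /tsum -(lin_sum _ _ f_lin) HSl (linZ f_lin) oBE eBE.
- transitivity (tsum (fun y z => f (mA y (SA z))) (DA (g u))).
    apply: (tsum_DB_on (h := fun y z => mB y (f (SA (g z))))) => // [|y z Hy Hz].
      exact: bilin_comp fmA_bilin id_lin SA_lin.
    by rewrite mBE // fK.
  by rewrite /tsum -(lin_sum _ _ f_lin) HSr (linZ f_lin) oBE eBE.
Qed.

Lemma transport_hopf :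
  (exists SA, is_antipode_on (fun _ : A => True) mA oA DA eA SA) ->
  is_hopf_on PB mB oB DB eB.
Proof.
case=> SA HSA; split; first exact: transport_bialg.
by exists (fun v => f (SA (g v))); exact: transport_antipode.
Qed.

End Transport.

(* Given a family act a b : V -> V (the right
   translations tau_a^b or the left ones sigma^a_b), Tn is the span of the
   act a b, an element g of Tn carries a chosen presentation tn_rep g, and the
   coproduct and counit are defined on presentations through a formula pr for
   the coproduct of each act a b. *)
Section TranslationSpan.
Variables (F : fieldType) (V : lmodType F) (act : V -> V -> V -> V).

Definition tn_eval (s : seq (F * V * V)) : V -> V :=
  \sum_(t <- s) t.1.1 *: act t.1.2 t.2.

Definition inTn (g : V -> V) : Prop := exists s, g = tn_eval s.

Definition tn_rep (g : V -> V) : seq (F * V * V) :=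
  epsilon (inhabits [::]) (fun s => g = tn_eval s).

Definition Tn_D (D : V -> seq (V * V))
    (pr : V * V -> V * V -> (V -> V) * (V -> V)) (g : V -> V) :
    seq ((V -> V) * (V -> V)) :=
  flatten [seq tscale t.1.1 [seq pr p q | p <- D t.1.2, q <- D t.2]
          | t <- tn_rep g].

Definition Tn_e (e : V -> F) (g : V -> V) : F :=
  \sum_(t <- tn_rep g) t.1.1 * (e t.1.2 * e t.2).

Lemma tn_repP g : inTn g -> g = tn_eval (tn_rep g).
Proof.
case=> s Hs.
exact: (epsilon_spec (inhabits [::]) (fun s => g = tn_eval s) (ex_intro _ s Hs)).
Qed.

Lemma inTn_act k a b : inTn (k *: act a b).
Proof. by exists [:: (k, a, b)]; rewrite /tn_eval big_seq1. Qed.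

Lemma Tn_DP D pr g p :
  (forall p q, exists a b a' b', pr p q = (act a b, act a' b')) ->
  List.In p (Tn_D D pr g) -> inTn p.1 /\ inTn p.2.
Proof.
move=> Hpr Hp; have [l Hl Hpl] := In_flatten Hp.
have [t _ El] := In_map Hl; rewrite {}El in Hpl.
have [r Hr ->] := In_map Hpl; have [l' Hl' Hrl] := In_flatten Hr.
have [p1 _ El'] := In_map Hl'; rewrite {}El' in Hrl.
have [q _ ->] := In_map Hrl; have [a [b [a' [b' ->]]]] := Hpr p1 q.
split; first exact: inTn_act.
by rewrite -[act a' b']scale1r; exact: inTn_act.
Qed.

Section Iso.
Variables (D : V -> seq (V * V)) (e : V -> F).
Variables (mul : V -> V -> V) (one : V) (mulT : (V -> V) -> (V -> V) -> V -> V)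
          (oneT : V -> V).
Variables (f : V -> V -> V) (x : V) (m : V -> V -> V)
          (pr : V * V -> V * V -> (V -> V) * (V -> V)).
Hypothesis HC : is_coalgebra D e.
Hypothesis f_lin : lin f.
Hypothesis f_ev : forall u, f u x = u.
Hypothesis f_act : forall u, exists a b, f u = act a b.
Hypothesis act_f : forall a b, act a b = f (m a b).
Hypothesis D_m : forall a b (W : lmodType F) (h : (V -> V) -> (V -> V) -> W), bilin h ->
  tsum (fun y z => h (f y) (f z)) (D (m a b)) = tsum h [seq pr p q | p <- D a, q <- D b].
Hypothesis e_m : forall a b, e (m a b) = e a * e b.
Hypothesis f_mul : forall u v, f (mul u v) = mulT (f u) (f v).
Hypothesis f_one : f one = oneT.

(* The element of V presented by s, i.e. the preimage of tn_eval s. *)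
Let comb (s : seq (F * V * V)) : V := \sum_(t <- s) t.1.1 *: m t.1.2 t.2.

Let tn_evalE s : tn_eval s = f (comb s).
Proof.
rewrite /tn_eval /comb (lin_sum _ _ f_lin); apply: eq_bigr => t _.
by rewrite act_f (linZ f_lin).
Qed.

Let inTn_f u : inTn (f u).
Proof. by have [a [b ->]] := f_act u; rewrite -[act a b]scale1r; exact: inTn_act. Qed.

Let rep_comb u : u = comb (tn_rep (f u)).
Proof. by rewrite -[LHS]f_ev [f u in LHS](tn_repP (inTn_f u)) tn_evalE f_ev. Qed.

Let e_comb s : e (comb s) = \sum_(t <- s) t.1.1 * e (m t.1.2 t.2).
Proof.
have e0 : e 0 = 0.
  have := co_elin HC 1 0 0; rewrite scaler0 addr0 mul1r => E.
  by apply: (@addrI _ (e 0)); rewrite addr0 -E.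
elim: s => [|t s IH]; first by rewrite /comb big_nil e0 big_nil.
by rewrite /comb !big_cons -[_ *: _ + _]/(_ *: _ + _) (co_elin HC) IH.
Qed.

Lemma translation_iso :
  is_bialg_iso (fun _ : V => True) mul one D e inTn mulT oneT (Tn_D D pr) (Tn_e e) f.
Proof.
split=> //.
- move=> v [s Hv]; exists (comb s); split; first by rewrite Hv tn_evalE.
  by move=> u [_ Hu]; rewrite -[RHS]f_ev Hu Hv tn_evalE f_ev.
- (* Both sides are sum_t k_t h(D(m a_t b_t)) over the presentation s of f u. *)
  move=> u _ W h Hh; set s := tn_rep (f u).
  have Hhf : bilin (fun y z => h (f y) (f z)) := bilin_comp Hh f_lin f_lin.
  have L := tsum_lin (co_Dlin HC) Hhf.
  change (tsum h (flatten [seq tscale t.1.1 [seq pr p q | p <- D t.1.2, q <- D t.2]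
                          | t <- s]) = tsum h [seq (f p.1, f p.2) | p <- D u]).
  rewrite tsum_map (rep_comb u) -/s /comb (lin_sum _ _ L) [LHS]/tsum big_flatten big_map.
  apply: eq_bigr => t _; rewrite -/(tsum _ _) tsum_tscale; last by case: Hh.
  by rewrite (linZ L) D_m.
- by move=> u _; rewrite {2}(rep_comb u) e_comb; apply: eq_bigr => t _; rewrite e_m.
Qed.

End Iso.
End TranslationSpan.

Lemma Tnr_DP (F : fieldType) (V : lmodType F) (D : V -> seq (V * V))
    (chi : V -> V -> V -> V) g p :
  inTnr chi g -> List.In p (Tnr_D D chi g) -> inTnr chi p.1 /\ inTnr chi p.2.
Proof.
by move=> _; apply: (Tn_DP (act := tau chi)) => p' q; exists p'.2, q.1, p'.1, q.2.
Qed.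

Lemma Tnl_DP (F : fieldType) (V : lmodType F) (D : V -> seq (V * V))
    (chi : V -> V -> V -> V) g p :
  inTnl chi g -> List.In p (Tnl_D D chi g) -> inTnl chi p.1 /\ inTnl chi p.2.
Proof.
by move=> _; apply: (Tn_DP (act := sigma chi)) => p' q; exists p'.1, q.2, p'.2, q.1.
Qed.

Section HopfHeap.
Variables (F : fieldType) (V : lmodType F).
Implicit Types W : lmodType F.
Variables (D : V -> seq (V * V)) (e : V -> F) (chi : V -> V -> V -> V) (x : V).
Hypothesis HH : is_hopf_heap D e chi.
Hypothesis Hx : grouplike D e x.

Let HC : is_coalgebra D e. Proof. exact: hh_coalg HH. Qed.
Let chi_lin1 b c : lin (fun a => chi a b c). Proof. by case: (hh_trilin HH). Qed.
Let chi_lin2 a c : lin (fun b => chi a b c). Proof. by case: (hh_trilin HH). Qed.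
Let chi_lin3 a b : lin (chi a b). Proof. by case: (hh_trilin HH). Qed.
Let e_x : e x = 1. Proof. by case: Hx. Qed.

Lemma tsum_Dx W (h : V -> V -> W) : bilin h -> tsum h (D x) = h x x.
Proof. by move=> Hh; rewrite (tsum_teq2 Hx.1 Hh) /tsum big_seq1. Qed.

(* [x,x,c] = c = [c,x,x]: the heap axioms evaluated at a group-like x. *)
Lemma chi_xx_l c : chi x x c = c.
Proof.
transitivity (tsum (fun y z => chi y z c) (D x)); first by rewrite tsum_Dx //; split.
by have := hh_left HH c x; rewrite e_x scale1r.
Qed.

Lemma chi_xx_r c : chi c x x = c.
Proof.
transitivity (tsum (chi c) (D x)); first by rewrite tsum_Dx //; split.
by have := hh_right HH c x; rewrite e_x scale1r.
Qed.

Lemma Dchi_x_mid a c :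
  teq2 (D (chi a x c)) [seq (chi p.1 x r.1, chi p.2 x r.2) | p <- D a, r <- D c].
Proof.
move=> W h Hh; rewrite (hh_Dchi HH a x c Hh) !big_allpairs_dep /=.
apply: eq_bigr => p _; rewrite big_allpairs_dep /=.
have := tsum_Dx (h := fun y z => \sum_(r <- D c) h (chi p.1 z r.1) (chi p.2 y r.2)).
by apply; apply: (bilin_flip (bilin_sum _ Hh _ _)) => r; exact: chi_lin2.
Qed.

Lemma Dchi_x_left b c :
  teq2 (D (chi x b c)) [seq (chi x q.2 r.1, chi x q.1 r.2) | q <- D b, r <- D c].
Proof.
move=> W h Hh; rewrite (hh_Dchi HH x b c Hh) !big_allpairs_dep /=.
under eq_bigr => p _ do rewrite big_allpairs_dep /=.
have := tsum_Dx (h := fun y z => \sum_(q <- D b) \sum_(r <- D c)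
                                   h (chi y q.2 r.1) (chi z q.1 r.2)).
case: Hh => Hh1 Hh2; apply; split=> [z|y]; apply: lin_sumf => q; apply: lin_sumf => r.
  exact: lin_comp (chi_lin1 _ _) (Hh1 _).
exact: lin_comp (chi_lin1 _ _) (Hh2 _).
Qed.

Lemma Dchi_x_right a b :
  teq2 (D (chi a b x)) [seq (chi p.1 q.2 x, chi p.2 q.1 x) | p <- D a, q <- D b].
Proof.
move=> W h Hh; rewrite (hh_Dchi HH a b x Hh) !big_allpairs_dep /=.
apply: eq_bigr => p _; rewrite big_allpairs_dep /=; apply: eq_bigr => q _.
have := tsum_Dx (h := fun y z => h (chi p.1 q.2 y) (chi p.2 q.1 z)).
by apply; apply: bilin_comp.
Qed.

Lemma Hx_bialg : is_bialg_on (fun _ : V => True) (Hx_mul chi x) x D e.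
Proof.
split=> //.
- by move=> a u v w _ _ _; exact: chi_lin1.
- by move=> a u v w _ _ _; exact: chi_lin3.
- by move=> u v w _ _ _; rewrite /Hx_mul (hh_assoc HH).
- by move=> u _; rewrite /Hx_mul chi_xx_l.
- by move=> u _; rewrite /Hx_mul chi_xx_r.
- by move=> a u v _ _; exact: (co_Dlin HC).
- by move=> a u v _ _; exact: (co_elin HC).
- by move=> u _; exact: (co_coassoc HC).
- by move=> u _; exact: (co_counitl HC).
- by move=> u _; exact: (co_counitr HC).
- by move=> u v _ _; exact: Dchi_x_mid.
- exact: Hx.1.
- by move=> u v _ _; rewrite /Hx_mul (hh_echi HH) e_x mulr1.
Qed.

Lemma Hx_antipode :
  is_antipode_on (fun _ : V => True) (Hx_mul chi x) x D e (Hx_S chi x).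
Proof.
split=> // [a u v _ _|u _]; first exact: chi_lin2.
split.
- rewrite -(hh_right HH x u); apply: eq_bigr => p _.
  by rewrite /Hx_mul /Hx_S (hh_assoc HH) chi_xx_l.
- rewrite -(hh_left HH x u); apply: eq_bigr => p _.
  by rewrite /Hx_mul /Hx_S -(hh_assoc HH) chi_xx_r.
Qed.

(* tau_x^{[x,a,b]} = tau_a^b and sigma^{[a,b,x]}_x = sigma^a_b: every
   translation is the image of an element of C. *)
Lemma tau_xchi a b : tau chi x (chi x a b) = tau chi a b.
Proof. by apply/funext => c; rewrite /tau -(hh_assoc HH) chi_xx_r. Qed.

Lemma sigma_xchi a b : sigma chi (chi a b x) x = sigma chi a b.
Proof. by apply/funext => c; rewrite /sigma (hh_assoc HH) chi_xx_l. Qed.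

Let tau_x_lin : lin (tau chi x).
Proof. by move=> a u v; apply/funext => c; exact: chi_lin3. Qed.

Let sigma_x_lin : lin (fun a => sigma chi a x).
Proof. by move=> a u v; apply/funext => c; exact: chi_lin1. Qed.

Lemma right_translation_iso :
  is_bialg_iso (fun _ : V => True) (Hx_mul chi x) x D e
    (inTnr chi) (@Tnr_mul F V) (fun c : V => c) (Tnr_D D chi) (Tnr_e e chi)
    (fun a => tau chi x a).
Proof.
apply: (translation_iso (act := tau chi) (x := x) (m := chi x)
          (pr := fun p q => (tau chi p.2 q.1, tau chi p.1 q.2))) => //.
- exact: chi_xx_l.
- by move=> u; exists x, u.
- by move=> a b; rewrite tau_xchi.
- move=> a b W h Hh.
  rewrite (tsum_teq2 (Dchi_x_left a b) (bilin_comp Hh tau_x_lin tau_x_lin)).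
  rewrite /tsum !big_allpairs_dep; apply: eq_bigr => p _; apply: eq_bigr => q _.
  by rewrite /= !tau_xchi.
- by move=> a b; rewrite (hh_echi HH) e_x mul1r.
- by move=> u v; apply/funext => c; rewrite /Tnr_mul /Hx_mul /tau (hh_assoc HH).
- by apply/funext => c; rewrite /tau chi_xx_r.
Qed.

Lemma left_translation_iso :
  is_bialg_iso (fun _ : V => True) (Hx_mul chi x) x D e
    (inTnl chi) (@Tnl_mul F V) (fun c : V => c) (Tnl_D D chi) (Tnl_e e chi)
    (fun a => sigma chi a x).
Proof.
apply: (translation_iso (act := sigma chi) (x := x) (m := fun a b => chi a b x)
          (pr := fun p q => (sigma chi p.1 q.2, sigma chi p.2 q.1))) => //.
- exact: chi_xx_r.
- by move=> u; exists u, x.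
- by move=> a b; rewrite sigma_xchi.
- move=> a b W h Hh.
  rewrite (tsum_teq2 (Dchi_x_right a b) (bilin_comp Hh sigma_x_lin sigma_x_lin)).
  rewrite /tsum !big_allpairs_dep; apply: eq_bigr => p _; apply: eq_bigr => q _.
  by rewrite /= !sigma_xchi.
- by move=> a b; rewrite (hh_echi HH) e_x mulr1.
- by move=> u v; apply/funext => c; rewrite /Tnl_mul /Hx_mul /sigma (hh_assoc HH).
- by apply/funext => c; rewrite /sigma chi_xx_l.
Qed.

End HopfHeap.

(* H_x(C) is a Hopf algebra, isomorphic as a bialgebra to Tn^r C (via a |->
   tau_x^a) and to Tn^l C (via a |-> sigma^a_x); both isomorphisms are
   inverted by evaluation at x, so Tn^r C and Tn^l C are Hopf algebras. *)
Theorem mainTheorem5 (F : fieldType) (V : lmodType F)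
  (D : V -> seq (V * V)) (e : V -> F) (chi : V -> V -> V -> V) (x : V) :
  is_hopf_heap D e chi -> grouplike D e x ->
  [/\ (* H_x(C) is a Hopf algebra (bialgebra with antipode a |-> [x,a,x]) *)
      is_bialg_on (fun _ : V => True) (Hx_mul chi x) x D e /\
      is_antipode_on (fun _ : V => True) (Hx_mul chi x) x D e (Hx_S chi x),
      (* Tn^r C and Tn^l C are bialgebras *)
      is_bialg_on (inTnr chi) (@Tnr_mul F V) (fun c : V => c) (Tnr_D D chi) (Tnr_e e chi) /\
      is_bialg_on (inTnl chi) (@Tnl_mul F V) (fun c : V => c) (Tnl_D D chi) (Tnl_e e chi),
      (* H_x(C) ~ Tn^r C via a |-> tau_x^a, inverse tau_a^b |-> [x,a,b] *)
      is_bialg_iso (fun _ : V => True) (Hx_mul chi x) x D e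
                   (inTnr chi) (@Tnr_mul F V) (fun c : V => c) (Tnr_D D chi) (Tnr_e e chi)
                   (fun a => tau chi x a) /\
      (forall a b : V, tau chi x (chi x a b) = tau chi a b),
      (* H_x(C) ~ Tn^l C via a |-> sigma^a_x *)
      is_bialg_iso (fun _ : V => True) (Hx_mul chi x) x D e
                   (inTnl chi) (@Tnl_mul F V) (fun c : V => c) (Tnl_D D chi) (Tnl_e e chi)
                   (fun a => sigma chi a x) &
      (* consequently Tn^r C and Tn^l C are Hopf algebras *)
      is_hopf_on (inTnr chi) (@Tnr_mul F V) (fun c : V => c) (Tnr_D D chi) (Tnr_e e chi) /\
      is_hopf_on (inTnl chi) (@Tnl_mul F V) (fun c : V => c) (Tnl_D D chi) (Tnl_e e chi)].
Proof.
move=> HH Hx.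
have HA := Hx_bialg HH Hx.
have HS : exists S, is_antipode_on (fun _ : V => True) (Hx_mul chi x) x D e S.
  by exists (Hx_S chi x); exact: Hx_antipode.
have ev_lin : lin (fun g : V -> V => g x) by [].
have Tnr_hopf := transport_hopf HA (right_translation_iso HH Hx) ev_lin
                   (chi_xx_l HH Hx) (@Tnr_DP _ _ D chi) HS.
have Tnl_hopf := transport_hopf HA (left_translation_iso HH Hx) ev_lin
                   (chi_xx_r HH Hx) (@Tnl_DP _ _ D chi) HS.
split.
- by split; [exact: HA | exact: Hx_antipode].
- by split; [exact: Tnr_hopf.1 | exact: Tnl_hopf.1].
- by split; [exact: right_translation_iso | exact: tau_xchi HH Hx].
- exact: left_translation_iso.
- by split.
Qed.
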